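(* Let $\mathcal{X}$ be a family of subsets of $[d]$ such that at least one $\mathcal{X}$-matroid exists, and suppose the refinement procedure reaches the stationary function $v_{\mathcal{X}}$. If $v_{\mathcal{X}}$ is submodular, then $v_{\mathcal{X}}$ is the rank function of an $\mathcal{X}$-matroid, and this $\mathcal{X}$-matroid is the unique minimal $\mathcal{X}$-matroid with respect to the dependency order.
   Context: An $\mathcal{X}$-matroid is a matroid on $[d]$ in which every member of $\mathcal{X}$ is a circuit. Dependency order: $N_1\le N_2$ iff every dependent set of $N_1$ is dependent in $N_2$. A proper $\mathcal{X}$-sequence is a sequence $\mathcal{S}=(X_1,\dots,X_k)$ ($k\ge0$) of members of $\mathcal{X}$ with $X_i\not\subseteq\bigcup_{j<i}X_j$ for $i\ge2$; for $F\subseteq[d]$, $\mathrm{val}(F,\mathcal{S})=|F\cup\bigcup_{i=1}^kX_i|-k$ and $\mathrm{val}_{\mathcal{X}}(F)=\min_{\mathcal{S}}\mathrm{val}(F,\mathcal{S})$. Refinement procedure: $\mathrm{val}^1_{\mathcal{X}}=\mathrm{val}_{\mathcal{X}}$, and $\mathrm{val}^{n+1}_{\mathcal{X}}$ is obtained from $\mathrm{val}^n_{\mathcal{X}}$ by the first applicable rule: (i) if there are $A,B\subseteq[d]$, $x\in\mathcal{X}$ with $A\cap B\subseteq x$ and $\mathrm{val}^n(A\cup B)>\mathrm{val}^n(A)+\mathrm{val}^n(B)-\min\{|A\cap B|,|x|-1\}$, for one such choice lower $\mathrm{val}^{n+1}(A\cup B)$ to the right-hand side; (ii) else if there are $A\subsetneq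 B$ with $\mathrm{val}^n(A)>\mathrm{val}^n(B)$, for one such choice set $\mathrm{val}^{n+1}(A)=\mathrm{val}^n(B)$; (iii) else if there are $B\subsetneq A$ with $\mathrm{val}^n(A)>\mathrm{val}^n(B)+|A\setminus B|$, for one such choice set $\mathrm{val}^{n+1}(A)=\mathrm{val}^n(B)+|A\setminus B|$; (iv) else $\mathrm{val}^{n+1}=\mathrm{val}^n$; all other values unchanged. The stationary function is $v_{\mathcal{X}}$ (independent of the choices). A function $f:2^{[d]}\to\mathbb{Z}$ is submodular if $f(A\cup B)+f(A\cap B)\le f(A)+f(B)$ for all $A,B$. *)

From mathcomp Require Import all_boot all_order all_algebra.
Set Implicit Arguments. Unset Strict Implicit. Unset Printing Implicit Defensive.
Import Order.TTheory GRing.Theory Num.Theory.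
Local Open Scope ring_scope.

Section Defs.
Variable d : nat.
Local Notation E := ('I_d).

Definition is_matroid (M : {set {set E}}) : Prop :=
  [/\ set0 \in M,
      (forall I J : {set E}, J \in M -> I \subset J -> I \in M) &
      (forall I J : {set E}, I \in M -> J \in M -> (#|I| < #|J|)%N ->
         exists2 e, e \in J :\: I & e |: I \in M)].

Definition is_circuit (M : {set {set E}}) (C : {set E}) : Prop :=
  C \notin M /\ (forall D : {set E}, D \proper C -> D \in M).

Definition is_X_matroid (X : {set {set E}}) (M : {set {set E}}) : Prop :=
  is_matroid M /\ (forall x, x \in X -> is_circuit M x).

Definition mrank (M : {set {set E}}) (A : {set E}) : nat :=
  \max_(I in M | I \subset A) #|I|.

Definition dep_le (N1 N2 : {set {set E}}) : Prop :=
  forall A : {set E}, A \notin N1 -> A \notin N2.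

Definition proper_seq (X : {set {set E}}) (s : seq {set E}) : Prop :=
  (forall i, (i < size s)%N -> nth set0 s i \in X) /\
  (forall i, (1 <= i)%N -> (i < size s)%N ->
     ~~ (nth set0 s i \subset \bigcup_(j < i) nth set0 s j)).

Definition val_seq (F : {set E}) (s : seq {set E}) : int :=
  (#|F :|: \bigcup_(Y <- s) Y|)%:Z - (size s)%:Z.

Definition is_val_X (X : {set {set E}}) (f : {set E} -> int) : Prop :=
  forall F : {set E},
    (exists2 s, proper_seq X s & f F = val_seq F s) /\
    (forall s, proper_seq X s -> f F <= val_seq F s).

Definition upd (f : {set E} -> int) (S : {set E}) (v : int) : {set E} -> int :=
  fun T => if T == S then v else f T.

Definition rule_i_app (X : {set {set E}}) (f : {set E} -> int) (A B x : {set E}) : Prop :=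
  [/\ x \in X, A :&: B \subset x &
      f (A :|: B) > f A + f B - Num.min (#|A :&: B|%:Z) (#|x|%:Z - 1)].

Definition rule_ii_app (f : {set E} -> int) (A B : {set E}) : Prop :=
  A \proper B /\ f A > f B.

Definition rule_iii_app (f : {set E} -> int) (A B : {set E}) : Prop :=
  B \proper A /\ f A > f B + (#|A :\: B|)%:Z.

(* one step of the refinement procedure: val^n = f  ~>  val^{n+1} = g *)
Definition refine_step (X : {set {set E}}) (f g : {set E} -> int) : Prop :=
  (exists A B x, rule_i_app X f A B x /\
     g = upd f (A :|: B) (f A + f B - Num.min (#|A :&: B|%:Z) (#|x|%:Z - 1)))
  \/ ((forall A B x, ~ rule_i_app X f A B x) /\
      exists A B, rule_ii_app f A B /\ g = upd f A (f B))
  \/ ((forall A B x, ~ rule_i_app X f A B x) /\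
      (forall A B, ~ rule_ii_app f A B) /\
      exists A B, rule_iii_app f A B /\ g = upd f A (f B + (#|A :\: B|)%:Z))
  \/ ((forall A B x, ~ rule_i_app X f A B x) /\
      (forall A B, ~ rule_ii_app f A B) /\
      (forall A B, ~ rule_iii_app f A B) /\ g = f).

Definition stationary (X : {set {set E}}) (f : {set E} -> int) : Prop :=
  (forall A B x, ~ rule_i_app X f A B x) /\
  (forall A B, ~ rule_ii_app f A B) /\
  (forall A B, ~ rule_iii_app f A B).

Definition submodular (f : {set E} -> int) : Prop :=
  forall A B : {set E}, f (A :|: B) + f (A :&: B) <= f A + f B.

End Defs.

(* Every X-matroid N gives a lower bound for every stage of the refinement:
   its rank is below val_X because each circuit of a proper X-sequence raises
   the nullity of the union by one, and each refinement rule is a valid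
   inequality for matroid ranks (rule (i) because a subset of a circuit x has
   rank at least min(|A n B|, |x| - 1)). Hence v(empty) = 0, and stationarity
   says that v is monotone with unit increase; being submodular, v is then the
   rank function of the matroid M whose independent sets are those I with
   v(I) = |I|. Any X-matroid N has rank below v, so its independent sets are
   independent in M: M is below N in the dependency order. The members of X
   are circuits of M since v(x) <= val(x, (x)) = |x| - 1 and their proper
   subsets are independent in some X-matroid. *)
From mathcomp Require Import all_boot all_order all_algebra zify.
Import Order.TTheory GRing.Theory Num.Theory.
Set Implicit Arguments. Unset Strict Implicit. Unset Printing Implicit Defensive.
Local Open Scope ring_scope.

Lemma finset_ind (T : finType) (P : {set T} -> Prop) :
  P set0 -> (forall (x : T) (A : {set T}), x \notin A -> P A -> P (x |: A)) ->
  forall A, P A.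
Proof.
move=> P0 PU A; move Hn: #|A| => n; elim: n A Hn => [|n IH] A Hn.
  by rewrite (cards0_eq Hn).
have /set0Pn[x xA] : A != set0 by rewrite -card_gt0 Hn.
rewrite -(setD1K xA); apply: PU; first by rewrite !inE eqxx.
by apply: IH; move: Hn; rewrite (cardsD1 x A) xA add1n => -[].
Qed.

Lemma cardsD_sub (T : finType) (A B : {set T}) :
  B \subset A -> #|A| = (#|B| + #|A :\: B|)%N.
Proof. by move=> sBA; rewrite -(cardsID B A) (setIidPr sBA). Qed.

Definition nullity d (N : {set {set 'I_d}}) (A : {set 'I_d}) : nat :=
  (#|A| - mrank N A)%N.

Section MatroidRank.
Variable d : nat.
Local Notation E := ('I_d).
Variable N : {set {set E}}.
Hypothesis HN : is_matroid N.
Local Notation r := (mrank N).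

Lemma matroid0 : set0 \in N. Proof. by case: HN. Qed.

Lemma matroidS (I J : {set E}) : J \in N -> I \subset J -> I \in N.
Proof. by case: HN => _ H _; apply: H. Qed.

Lemma matroid_exchange (I J : {set E}) : I \in N -> J \in N -> (#|I| < #|J|)%N ->
  exists2 e, e \in J :\: I & e |: I \in N.
Proof. by case: HN => _ _ H; apply: H. Qed.

Lemma mrank_ge (A I : {set E}) : I \in N -> I \subset A -> (#|I| <= r A)%N.
Proof. by move=> IN sIA; apply: leq_bigmax_cond; rewrite IN sIA. Qed.

Lemma mrank_le (A : {set E}) m :
  (forall I, I \in N -> I \subset A -> (#|I| <= m)%N) -> (r A <= m)%N.
Proof. by move=> H; apply/bigmax_leqP => I /andP[]; apply: H. Qed.

Lemma mrank_basis (A : {set E}) : exists I, [/\ I \in N, I \subset A & #|I| = r A].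
Proof.
have P0 : (set0 \in N) && (set0 \subset A) by rewrite matroid0 sub0set.
case: (@arg_maxnP _ set0 (fun I : {set E} => (I \in N) && (I \subset A))
  (fun I => #|I|) P0) => I /andP[IN sIA] Imax.
exists I; split => //; apply/eqP; rewrite eqn_leq mrank_ge //=.
by apply: mrank_le => J JN sJA; apply: Imax; rewrite JN sJA.
Qed.

Lemma mrank_card (A : {set E}) : (r A <= #|A|)%N.
Proof. by apply: mrank_le => I _; apply: subset_leq_card. Qed.

Lemma mrank_indep (I : {set E}) : I \in N -> r I = #|I|.
Proof. by move=> IN; apply/eqP; rewrite eqn_leq mrank_card mrank_ge. Qed.

Lemma mrank_mono (A B : {set E}) : A \subset B -> (r A <= r B)%N.
Proof.
move=> sAB; have [I [IN sIA <-]] := mrank_basis A.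
exact: mrank_ge IN (subset_trans sIA sAB).
Qed.

Lemma mrank_basis_ext (I0 S : {set E}) : I0 \in N -> I0 \subset S ->
  exists I, [/\ I \in N, I0 \subset I, I \subset S & #|I| = r S].
Proof.
have [J [JN sJS cardJ]] := mrank_basis S.
move Hm: (r S - #|I0|)%N => m; elim: m I0 Hm => [|m IH] I0 Hm I0N sI0S.
  exists I0; split => //; apply/eqP; rewrite eqn_leq mrank_ge //=.
  by move/eqP: Hm; rewrite subn_eq0.
have [|e] := matroid_exchange I0N JN; first by lia.
rewrite inE => /andP[eI0 eJ] eI0N.
have [||I [IN sI sIS cardI]] := IH (e |: I0) _ eI0N.
- by rewrite cardsU1 eI0; lia.
- by rewrite subUset sub1set sI0S (subsetP sJS).
by exists I; split => //; apply: subset_trans sI; apply: subsetUr.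
Qed.

Lemma mrank_submod (A B : {set E}) : (r (A :|: B) + r (A :&: B) <= r A + r B)%N.
Proof.
have [I0 [I0N sI0 <-]] := mrank_basis (A :&: B).
have sI0AB : I0 \subset A :|: B.
  by apply: subset_trans sI0 _; rewrite subIset // subsetUl.
have [I [IN sI0I sI <-]] := mrank_basis_ext I0N sI0AB.
have IS_N (S : {set E}) : I :&: S \in N by apply: matroidS IN (subsetIl _ _).
have rA : (#|I :&: A| <= r A)%N by apply: mrank_ge (subsetIr _ _).
have rB : (#|I :&: B| <= r B)%N by apply: mrank_ge (subsetIr _ _).
have I_AB : (I :&: A) :|: (I :&: B) = I by rewrite -setIUr; apply/setIidPl.
have : (#|I0| <= #|(I :&: A) :&: (I :&: B)|)%N.
  by apply: subset_leq_card; rewrite setIACA setIid subsetI sI0I.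
by have := cardsUI (I :&: A) (I :&: B); rewrite I_AB; lia.
Qed.

Lemma mrank_subD (A B : {set E}) : B \subset A -> (r A <= r B + #|A :\: B|)%N.
Proof.
move=> sBA; have := mrank_submod B (A :\: B).
by rewrite -{1}(setIidPr sBA) setID; have := mrank_card (A :\: B); lia.
Qed.

Lemma nullity_mono (A B : {set E}) : A \subset B -> (nullity N A <= nullity N B)%N.
Proof.
move=> sAB; rewrite /nullity (cardsD_sub sAB).
by have := mrank_subD sAB; have := mrank_mono sAB; have := mrank_card A; lia.
Qed.

Section Circuit.
Variable x : {set E}.
Hypothesis Cx : is_circuit N x.

Lemma circuit_neq0 : x != set0.
Proof. by case: Cx => xN _; apply: contraNneq xN => ->; apply: matroid0. Qed.

Lemma mrank_circuitD1 e : e \in x -> r (x :\ e) = (#|x| - 1)%N.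
Proof.
case: Cx => _ Dx ex; rewrite mrank_indep; last exact/Dx/properD1.
by rewrite (cardsD1 e x) ex; lia.
Qed.

Lemma mrank_circuit : r x = (#|x| - 1)%N.
Proof.
have [e ex] := set0Pn _ circuit_neq0.
apply/eqP; rewrite eqn_leq -{2}(mrank_circuitD1 ex) mrank_mono ?subsetDl // andbT.
have [I [IN sIx <-]] := mrank_basis x; case: Cx => xN _.
have : I != x by apply: contraNneq xN => <-.
by rewrite eqEcard sIx /= -ltnNge; lia.
Qed.

Lemma mrank_sub_circuit (S : {set E}) : S \subset x ->
  Num.min #|S|%:Z (#|x|%:Z - 1) <= (r S)%:Z.
Proof.
move=> sSx; rewrite ge_min; have [->|neq] := eqVneq S x.
  by rewrite mrank_circuit; have := circuit_neq0; rewrite -card_gt0; lia.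
by case: Cx => _ Dx; rewrite mrank_indep ?lexx // Dx // properEneq neq.
Qed.

(* A point of x outside U can be deleted from U :|: x without lowering its
   rank, while the cardinality drops by one. *)
Lemma nullity_circuit_setU (U : {set E}) : ~~ (x \subset U) ->
  (nullity N U < nullity N (U :|: x))%N.
Proof.
case/subsetPn => e ex eU.
have sU : U \subset (U :|: x) :\ e by rewrite subsetD1 subsetUl.
apply: leq_ltn_trans (nullity_mono sU) _.
have := mrank_submod ((U :|: x) :\ e) x.
have -> : ((U :|: x) :\ e) :|: x = U :|: x.
  apply/setP => y; rewrite !inE.
  by case: (eqVneq y e) => [->|_]; rewrite ?ex ?orbT // -orbA orbb.
have -> : ((U :|: x) :\ e) :&: x = x :\ e.
  by apply/setP => y; rewrite !inE; case: (y \in x); rewrite ?orbT ?andbT ?andbF.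
rewrite mrank_circuitD1 // mrank_circuit.
rewrite /nullity (cardsD1 e (U :|: x)) inE ex orbT.
have := mrank_card x; have := circuit_neq0; rewrite -card_gt0.
have := mrank_card ((U :|: x) :\ e); have := mrank_card (U :|: x); lia.
Qed.

End Circuit.
End MatroidRank.

Section XMatroidBound.
Variable d : nat.
Local Notation E := ('I_d).
Variables X N : {set {set E}}.
Hypothesis HXN : is_X_matroid X N.
Local Notation r := (mrank N).

Let HN : is_matroid N := proj1 HXN.

Lemma nullity_proper_seq_prefix s : proper_seq X s -> forall k, (k <= size s)%N ->
  (k <= nullity N (\bigcup_(j < k) nth set0 s j))%N.
Proof.
case=> sX sproper; elim=> [//|k IH] lt_ks.
rewrite big_ord_recr /=; apply: leq_ltn_trans (IH (ltnW lt_ks)) _.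
have Cx : is_circuit N (nth set0 s k) by apply: (proj2 HXN); apply: sX.
apply: (nullity_circuit_setU HN Cx); case: (posnP k) Cx => [->|k_gt0] Cx.
  by rewrite big_ord0 subset0; exact: (circuit_neq0 HN Cx).
exact: sproper k_gt0 lt_ks.
Qed.

Lemma mrank_le_val_seq F s : proper_seq X s -> (r F)%:Z <= val_seq F s.
Proof.
move=> ps; have := nullity_proper_seq_prefix ps (leqnn _).
rewrite /val_seq (big_nth set0) big_mkord.
set U := \bigcup_(j < size s) nth set0 s j => null_U.
have := nullity_mono HN (subsetUr F U); have := mrank_mono HN (subsetUl F U).
by have := mrank_card N (F :|: U); rewrite /nullity in null_U *; lia.
Qed.

Lemma refine_step_mrank_le f g : refine_step X f g ->
  (forall A, (r A)%:Z <= f A) -> forall A, (r A)%:Z <= g A.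
Proof.
move=> [[A [B [x [[xX sABx _] ->]]]] | [[_ [A [B [[pAB _] ->]]]] |
   [[_ [_ [A [B [[pBA _] ->]]]]] | [_ [_ [_ ->]]]]]] rf T //;
  rewrite /upd; case: eqP => [->|_] //.
- have := mrank_sub_circuit HN (proj2 HXN x xX) sABx.
  have := mrank_submod HN A B; have := rf A; have := rf B.
  by move: (Num.min _ _) => m; lia.
- by have := mrank_mono HN (proper_sub pAB); have := rf B; lia.
- by have := mrank_subD HN (proper_sub pBA); have := rf B; lia.
Qed.

Lemma mrank_le_vals (vals : nat -> {set E} -> int) :
  is_val_X X (vals 0%N) -> (forall m, refine_step X (vals m) (vals m.+1)) ->
  forall m A, (r A)%:Z <= vals m A.
Proof.
move=> val0 steps; elim=> [|m IH] A; last exact: refine_step_mrank_le (steps m) IH A.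
by have [[s ps ->] _] := val0 A; apply: mrank_le_val_seq.
Qed.

End XMatroidBound.

Lemma refine_step_le d (X : {set {set 'I_d}}) f g :
  refine_step X f g -> forall A, g A <= f A.
Proof.
move=> [[A [B [x [[_ _ lt_f] ->]]]] | [[_ [A [B [[_ lt_f] ->]]]] |
   [[_ [_ [A [B [[_ lt_f] ->]]]]] | [_ [_ [_ ->]]]]]] T //;
  by rewrite /upd; case: eqP => [->|_] //; apply: ltW.
Qed.

Lemma vals_le_vals0 d (X : {set {set 'I_d}}) (vals : nat -> {set 'I_d} -> int) :
  (forall m, refine_step X (vals m) (vals m.+1)) -> forall m A, vals m A <= vals 0%N A.
Proof.
move=> steps; elim=> [//|m IH] A.
exact: le_trans (refine_step_le (steps m) A) (IH A).
Qed.

Section ValX.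
Variable d : nat.
Variables (X : {set {set 'I_d}}) (f : {set 'I_d} -> int).
Hypothesis valXf : is_val_X X f.

Lemma val_X_set0_le0 : f set0 <= 0.
Proof.
have ps0 : proper_seq X [::] by split.
by have := proj2 (valXf set0) _ ps0; rewrite /val_seq big_nil setU0 cards0.
Qed.

Lemma val_X_mem_le x : x \in X -> f x <= #|x|%:Z - 1.
Proof.
move=> xX; have ps1 : proper_seq X [:: x] by split; case=> [|[]].
by have := proj2 (valXf x) _ ps1; rewrite /val_seq big_seq1 setUid.
Qed.

End ValX.

Section Stationary.
Variable d : nat.
Variables (X : {set {set 'I_d}}) (f : {set 'I_d} -> int).
Hypothesis stf : stationary X f.

Lemma stationary_mono (A B : {set 'I_d}) : A \subset B -> f A <= f B.
Proof.
move=> sAB; have [->//|neqAB] := eqVneq A B.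
rewrite leNgt; apply/negP => lt_f; apply: (proj1 (proj2 stf) A B).
by split; rewrite // properEneq neqAB.
Qed.

Lemma stationary_subD (A B : {set 'I_d}) : B \subset A -> f A <= f B + #|A :\: B|%:Z.
Proof.
move=> sBA; have [->|neqBA] := eqVneq B A; first by rewrite setDv cards0 addr0.
rewrite leNgt; apply/negP => lt_f; apply: (proj2 (proj2 stf) A B).
by split; rewrite // properEneq neqBA.
Qed.

End Stationary.

Definition indep_of_rank d (v : {set 'I_d} -> int) : {set {set 'I_d}} :=
  [set I | v I == #|I|%:Z].

Lemma dep_le_anti d (N1 N2 : {set {set 'I_d}}) : dep_le N1 N2 -> dep_le N2 N1 -> N1 = N2.
Proof.
move=> le12 le21; apply/setP => A.
by apply/idP/idP; apply: contraTT; [apply: le21 | apply: le12].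
Qed.

Section RankFunction.
Variable d : nat.
Local Notation E := ('I_d).
Variable v : {set E} -> int.
Hypothesis v0 : v set0 = 0.
Hypothesis v_mono : forall A B : {set E}, A \subset B -> v A <= v B.
Hypothesis v_subD : forall A B : {set E}, B \subset A -> v A <= v B + #|A :\: B|%:Z.
Hypothesis v_submod : submodular v.
Local Notation M := (indep_of_rank v).

Lemma rank_le_card (A : {set E}) : v A <= #|A|%:Z.
Proof. by have := v_subD (sub0set A); rewrite v0 setD0 add0r. Qed.

Lemma rank_setU1_dep (I : {set E}) e :
  I \in M -> (e |: I \in M -> e \in I) -> v (e |: I) = v I.
Proof.
move=> IM; have [eI _|eI eIM] := boolP (e \in I).
  by rewrite (setUidPr (_ : [set e] \subset I)) // sub1set.
have {eIM} eIM : e |: I \notin M by apply/negP => /eIM.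
have sI := subsetUr [set e] I.
have := v_subD sI; have := v_mono sI; have := cardsD_sub sI.
move: IM eIM; rewrite !inE cardsU1 eI add1n => /eqP vI /eqP.
by rewrite vI; lia.
Qed.

Lemma rank_setU_const (I T : {set E}) :
  (forall e, e \in T -> v (e |: I) = v I) -> v (I :|: T) = v I.
Proof.
elim/finset_ind: T => [|e T _ IH] vT; first by rewrite setU0.
have {IH} vIT : v (I :|: T) = v I by apply: IH => e' e'T; apply: vT; rewrite !inE e'T orbT.
have -> : I :|: (e |: T) = (I :|: T) :|: (e |: I).
  by apply/setP => y; rewrite !inE; case: (y == e); case: (y \in I); case: (y \in T).
have sI : I \subset (I :|: T) :&: (e |: I) by rewrite subsetI subsetUl subsetUr.
have := v_submod (I :|: T) (e |: I); have := v_mono sI.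
have := v_mono (subsetUl (I :|: T) (e |: I)); have := v_mono (subsetUl I T).
by rewrite vIT vT ?setU11; lia.
Qed.

Lemma indep_of_rank_matroid : is_matroid M.
Proof.
split; first by rewrite inE v0 cards0.
  move=> I J; rewrite !inE => /eqP vJ sIJ; apply/eqP.
  have := v_subD sIJ; have := rank_le_card I.
  by rewrite vJ (cardsD_sub sIJ); lia.
move=> I J IM JM lt_IJ; apply/exists_inP; apply: contraT => no_ext.
have vIJ : v (I :|: J) = v I.
  apply: rank_setU_const => e eJ; apply: rank_setU1_dep => // eIM.
  apply: contraR no_ext => eI; apply/exists_inP; exists e => //.
  by rewrite inE eI.
move: IM JM; rewrite !inE => /eqP vI /eqP vJ.
by have := v_mono (subsetUr I J); rewrite vIJ vI vJ; lia.
Qed.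

Lemma mrank_indep_of_rank (A : {set E}) : v A = (mrank M A)%:Z.
Proof.
have [I [IM sIA cardI]] := mrank_basis indep_of_rank_matroid A.
have vIA : v (I :|: A) = v I.
  apply: rank_setU_const => e eA; apply: rank_setU1_dep => // eIM.
  have := mrank_ge eIM (_ : e |: I \subset A); rewrite subUset sub1set eA sIA.
  by rewrite -cardI cardsU1 => /(_ isT); case: (e \in I); rewrite //= add1n ltnn.
by move: vIA IM; rewrite (setUidPr sIA) inE -cardI => -> /eqP.
Qed.

Lemma dep_le_indep_of_rank (N : {set {set E}}) :
  (forall A, (mrank N A)%:Z <= v A) -> dep_le M N.
Proof.
move=> rN A; apply: contraNN => AN; rewrite inE; apply/eqP.
by have := rN A; have := rank_le_card A; rewrite (mrank_indep AN); lia.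
Qed.

End RankFunction.

Unset Implicit Arguments.

Theorem mainTheorem17 (d : nat) (X : {set {set 'I_d}})
  (vals : nat -> {set 'I_d} -> int) (n : nat) :
  (exists M, is_X_matroid X M) ->
  is_val_X X (vals 0%N) ->
  (forall m, refine_step X (vals m) (vals m.+1)) ->
  stationary X (vals n) ->
  submodular (vals n) ->
  exists M : {set {set 'I_d}},
    [/\ is_X_matroid X M,
        (forall A, vals n A = (mrank M A)%:Z),
        (forall N, is_X_matroid X N -> dep_le M N) &
        (forall N, is_X_matroid X N ->
           (forall N', is_X_matroid X N' -> dep_le N' N -> dep_le N N') ->
           N = M)].
Proof.
move=> [N0 XN0] val0 steps st subm.
have v_mono := stationary_mono st; have v_subD := stationary_subD st.
have v_le_val0 := vals_le_vals0 steps n.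
have rank_le_v N (XN : is_X_matroid X N) := mrank_le_vals XN val0 steps n.
have v0 : vals n set0 = 0.
  have := rank_le_v _ XN0 set0; have := v_le_val0 set0; have := val_X_set0_le0 val0.
  by have := mrank_card N0 set0; rewrite cards0; lia.
have minM N (XN : is_X_matroid X N) : dep_le (indep_of_rank (vals n)) N :=
  dep_le_indep_of_rank v0 v_subD (rank_le_v N XN).
have XM : is_X_matroid X (indep_of_rank (vals n)).
  split; first exact: indep_of_rank_matroid v0 v_mono v_subD subm.
  move=> x xX; split.
    rewrite inE; apply/negP => /eqP vx.
    by have := v_le_val0 x; have := val_X_mem_le val0 xX; rewrite vx; lia.
  move=> D pDx; apply: contraTT (proj2 (proj2 XN0 x xX) D pDx).
  exact: minM N0 XN0 D.
exists (indep_of_rank (vals n)); split => //.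
  exact: mrank_indep_of_rank v0 v_mono v_subD subm.
by move=> N XN Nmin; apply: dep_le_anti (Nmin _ XM (minM N XN)) (minM N XN).
Qed.
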